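(* Let $I\subseteq\mathbb R[x_1,\dots,x_n]$ be an ideal such that $\mathcal V_{\mathbb R}(I)$ has a convex-singular point. Then $I$ is not $\mathrm{TH}$-exact.
   Context: $\mathbb{R}[\mathbf x]_k$ denotes the polynomials of degree at most $k$. $\mathcal V_{\mathbb R}(I)=\{x\in\mathbb R^n: f(x)=0\ \forall f\in I\}$. A polynomial $h$ is $k$-sos modulo $I$ if there are $g_1,\dots,g_r\in\mathbb{R}[\mathbf x]_k$ with $h-\sum_i g_i^2\in I$. The $k$-th theta body is $\mathrm{TH}_k(I)=\{p\in\mathbb R^n: l(p)\ge 0$ for every $l\in\mathbb{R}[\mathbf x]_1$ that is $k$-sos modulo $I\}$. $I$ is $\mathrm{TH}_k$-exact if $\mathrm{TH}_k(I)=\operatorname{cl}(\operatorname{conv}(\mathcal V_{\mathbb R}(I)))$, and $\mathrm{TH}$-exact if it is $\mathrm{TH}_k$-exact for some $k$. For $p\in\mathcal V_{\mathbb R}(I)$, the tangent space $T_p(I)$ is the affine subspace through $p$ orthogonal to the linear span of the gradients $\nabla f(p)$ of all polynomials $f$ vanishing on $\mathcal V_{\mathbb R}(I)$. A point $p\in\mathcal V_{\mathbb R}(I)$ is convex-singular if it lies on the (relative) boundary of $\operatorname{conv}(\mathcal V_{\mathbb R}(I))$ and $T_p(I)$ intersects the relative interior of $\operatorname{conv}(\mathcal V_{\mathbb R}(I))$. *)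

From Stdlib Require Import Reals List Arith.
Import ListNotations.
Open Scope R_scope.

(* Points of R^n: functions nat -> R whose coordinates i >= n vanish. *)
Definition pt := nat -> R.
Definition InRn (n : nat) (x : pt) : Prop := forall i, (n <= i)%nat -> x i = 0.

Fixpoint sumR (l : list R) : R := match l with [] => 0 | a :: l' => a + sumR l' end.
Fixpoint sum_lt (n : nat) (f : nat -> R) : R :=
  match n with O => 0 | S m => sum_lt m f + f m end.

(* Monomials: exponent list [e_0; e_1; ...] for x_0^e_0 x_1^e_1 ... *)
Fixpoint mon_eval_from (e : list nat) (x : pt) (i : nat) : R :=
  match e with [] => 1 | a :: e' => x i ^ a * mon_eval_from e' x (S i) end.
Definition mon_eval (e : list nat) (x : pt) : R := mon_eval_from e x 0.
Fixpoint mon_deg (e : list nat) : nat := match e with [] => O | a :: e' => (a + mon_deg e')%nat end.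

Definition polyrep := list (R * list nat).
Definition prep_eval (p : polyrep) (x : pt) : R := sumR (map (fun m => fst m * mon_eval (snd m) x) p).
Definition prep_vars (n : nat) (p : polyrep) : Prop := Forall (fun m => (length (snd m) <= n)%nat) p.
Definition prep_deg_le (k : nat) (p : polyrep) : Prop := Forall (fun m => (mon_deg (snd m) <= k)%nat) p.

Fixpoint dec_at (j : nat) (e : list nat) : list nat :=
  match e, j with
  | [], _ => []
  | a :: e', O => pred a :: e'
  | a :: e', S j' => a :: dec_at j' e'
  end.
Definition mon_deriv (j : nat) (m : R * list nat) : R * list nat :=
  (fst m * INR (nth j (snd m) O), dec_at j (snd m)).
Definition prep_deriv (j : nat) (p : polyrep) : polyrep := map (mon_deriv j) p.

Definition represents (n : nat) (p : polyrep) (f : pt -> R) : Prop :=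
  prep_vars n p /\ forall x, f x = prep_eval p x.
Definition IsPoly (n : nat) (f : pt -> R) : Prop := exists p, represents n p f.
Definition IsPolyDeg (n k : nat) (f : pt -> R) : Prop :=
  exists p, represents n p f /\ prep_deg_le k p.

Definition IsIdeal (n : nat) (I : (pt -> R) -> Prop) : Prop :=
  (forall f, I f -> IsPoly n f) /\
  I (fun _ => 0) /\
  (forall f g, I f -> I g -> I (fun x => f x + g x)) /\
  (forall f h, I f -> IsPoly n h -> I (fun x => h x * f x)).

Definition VR (n : nat) (I : (pt -> R) -> Prop) (x : pt) : Prop :=
  InRn n x /\ forall f, I f -> f x = 0.

Definition ksos_mod (n k : nat) (I : (pt -> R) -> Prop) (h : pt -> R) : Prop :=
  exists gs : list (pt -> R),
    Forall (IsPolyDeg n k) gs /\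
    I (fun x => h x - sumR (map (fun g => g x ^ 2) gs)).

Definition TH (n k : nat) (I : (pt -> R) -> Prop) (p : pt) : Prop :=
  InRn n p /\ forall l, IsPolyDeg n 1 l -> ksos_mod n k I l -> 0 <= l p.

Definition comb (ws : list R) (xs : list pt) : pt :=
  fun i => sumR (map (fun wx => fst wx * snd wx i) (combine ws xs)).
Definition conv (S : pt -> Prop) (p : pt) : Prop :=
  exists (ws : list R) (xs : list pt),
    length ws = length xs /\ Forall (fun w => 0 <= w) ws /\ sumR ws = 1 /\
    Forall S xs /\ p = comb ws xs.
Definition aff (S : pt -> Prop) (p : pt) : Prop :=
  exists (ws : list R) (xs : list pt),
    length ws = length xs /\ sumR ws = 1 /\ Forall S xs /\ p = comb ws xs.
Definition dist2 (n : nat) (p q : pt) : R := sum_lt n (fun i => (p i - q i) ^ 2).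
Definition cl (n : nat) (S : pt -> Prop) (p : pt) : Prop :=
  InRn n p /\ forall eps, 0 < eps -> exists q, S q /\ dist2 n p q < eps.
Definition relint (n : nat) (S : pt -> Prop) (p : pt) : Prop :=
  S p /\ exists eps, 0 < eps /\ forall q, aff S q -> dist2 n p q < eps -> S q.
Definition relbd (n : nat) (S : pt -> Prop) (p : pt) : Prop :=
  cl n S p /\ ~ relint n S p.

Definition TH_k_exact (n k : nat) (I : (pt -> R) -> Prop) : Prop :=
  forall p, TH n k I p <-> cl n (conv (VR n I)) p.
Definition TH_exact (n : nat) (I : (pt -> R) -> Prop) : Prop :=
  exists k, TH_k_exact n k I.

(* tangent space T_p(I): p + (gradients of all polys vanishing on V_R(I))^perp *)
Definition tangent (n : nat) (I : (pt -> R) -> Prop) (p q : pt) : Prop :=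
  InRn n q /\
  forall f r, represents n r f -> (forall x, VR n I x -> f x = 0) ->
    sum_lt n (fun i => prep_eval (prep_deriv i r) p * (q i - p i)) = 0.

Definition convex_singular (n : nat) (I : (pt -> R) -> Prop) (p : pt) : Prop :=
  VR n I p /\ relbd n (conv (VR n I)) p /\
  exists q, tangent n I p q /\ relint n (conv (VR n I)) q.

From Stdlib Require Import Reals List Lra Lia Psatz Classical FunctionalExtensionality.
Import ListNotations.
Open Scope R_scope.

(* Suppose TH_k(I) = cl conv V, p is convex-singular and q is a tangent point at p in the
   relative interior of conv V. The derivative D at p in the direction q - p kills every
   polynomial vanishing on V, so on polynomials of degree <= k it is a finite signed
   combination of evaluations at points of V. If an affine l is k-sos modulo I, then
   l = sum g_i^2 on V, hence D l = 2 sum g_i(p) D g_i; by AM-GM, together with the bound of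
   values on V by l(q) that holds because q is interior, this gives l(q) <= K l(p) with K
   independent of l. So p - (q - p)/K lies in TH_k(I) = cl conv V, and p, lying strictly between
   it and the relative interior point q, is itself in the relative interior: a contradiction. *)

Lemma sum_lt_ext N f g : (forall i, (i < N)%nat -> f i = g i) -> sum_lt N f = sum_lt N g.
Proof. induction N; intros H; simpl; auto. rewrite IHN, H; auto. Qed.

Lemma sum_lt_plus N f g : sum_lt N (fun i => f i + g i) = sum_lt N f + sum_lt N g.
Proof. induction N; simpl; [lra|]. rewrite IHN; lra. Qed.

Lemma sum_lt_scal N c f : sum_lt N (fun i => c * f i) = c * sum_lt N f.
Proof. induction N; simpl; [lra|]. rewrite IHN; lra. Qed.

Lemma sum_lt_le N f g : (forall i, (i < N)%nat -> f i <= g i) -> sum_lt N f <= sum_lt N g.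
Proof. induction N; intros H; simpl; [lra|]. pose proof (H N ltac:(lia)). pose proof (IHN ltac:(auto)). lra. Qed.

Lemma sum_lt_shift N f : sum_lt (S N) f = f 0%nat + sum_lt N (fun i => f (S i)).
Proof. induction N; simpl in *; [lra|]. rewrite IHN. lra. Qed.

Lemma sum_lt_zero N : sum_lt N (fun _ => 0) = 0.
Proof. induction N; simpl; [lra|]. rewrite IHN; lra. Qed.

Lemma sum_lt_zero_ext N f : (forall i, (i < N)%nat -> f i = 0) -> sum_lt N f = 0.
Proof. intros H. rewrite (sum_lt_ext _ _ (fun _ => 0)) by auto. apply sum_lt_zero. Qed.

Lemma sum_lt_truncate N m f : (m <= N)%nat -> (forall i, (m <= i)%nat -> f i = 0) -> sum_lt N f = sum_lt m f.
Proof.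
  intros Hle H. induction N.
  - replace m with 0%nat by lia. auto.
  - destruct (Nat.eq_dec m (S N)); [subst; auto|]. simpl. rewrite IHN, H by lia. lra.
Qed.

Lemma sum_lt_delta N j0 a f : (j0 < N)%nat ->
  sum_lt N (fun j => (if Nat.eqb j j0 then a else 0) * f j) = a * f j0.
Proof.
  induction N; intros H; [lia|]. simpl. destruct (Nat.eq_dec j0 N).
  - subst. rewrite Nat.eqb_refl, sum_lt_zero_ext; [lra|].
    intros i Hi. destruct (Nat.eqb_spec i N); [lia|lra].
  - rewrite IHN by lia. destruct (Nat.eqb_spec N j0); [lia|lra].
Qed.

Lemma sumR_app l1 l2 : sumR (l1 ++ l2) = sumR l1 + sumR l2.
Proof. induction l1; simpl; [lra|]. rewrite IHl1; lra. Qed.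

Lemma sumR_map_seq N f : sumR (map f (seq 0 N)) = sum_lt N f.
Proof. induction N; [auto|]. rewrite seq_S, map_app, sumR_app. simpl. rewrite IHN. lra. Qed.

Lemma sumR_map_plus {A} (l : list A) f g :
  sumR (map (fun a => f a + g a) l) = sumR (map f l) + sumR (map g l).
Proof. induction l; simpl; [lra|]. rewrite IHl; lra. Qed.

Lemma sumR_map_scal {A} (l : list A) c f : sumR (map (fun a => c * f a) l) = c * sumR (map f l).
Proof. induction l; simpl; [lra|]. rewrite IHl; lra. Qed.

Lemma sumR_map_Rmult a ws : sumR (map (Rmult a) ws) = a * sumR ws.
Proof. induction ws; simpl; [ring|]. rewrite IHws; ring. Qed.

Lemma sumR_map_ext {A} (l : list A) f g :
  (forall a, In a l -> f a = g a) -> sumR (map f l) = sumR (map g l).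
Proof. induction l; intros H; simpl; auto. rewrite H, IHl; auto. intros; apply H; right; auto. left; auto. Qed.

Lemma sumR_map_le {A} (l : list A) f g :
  (forall a, In a l -> f a <= g a) -> sumR (map f l) <= sumR (map g l).
Proof.
  induction l; intros H; simpl; [lra|].
  pose proof (H a (in_eq _ _)). pose proof (IHl ltac:(intros; apply H; right; auto)). lra.
Qed.

Lemma sumR_map_zero {A} (l : list A) f : (forall a, In a l -> f a = 0) -> sumR (map f l) = 0.
Proof. induction l; intros H; simpl; [lra|]. rewrite H, IHl; auto. lra. intros; apply H; right; auto. left; auto. Qed.

Lemma sumR_map_nonneg {A} (l : list A) f : (forall a, 0 <= f a) -> 0 <= sumR (map f l).
Proof. intros H. induction l; simpl; [lra|]. pose proof (H a). lra. Qed.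

Lemma Rabs_sumR {A} (l : list A) f : Rabs (sumR (map f l)) <= sumR (map (fun a => Rabs (f a)) l).
Proof.
  induction l; simpl; [rewrite Rabs_R0; lra|].
  eapply Rle_trans; [apply Rabs_triang|lra].
Qed.

Lemma sum_lt_sumR_exchange {A} N (L : list (R * A)) (c : nat -> R) (F : nat -> A -> R) :
  sum_lt N (fun j => c j * sumR (map (fun wx => fst wx * F j (snd wx)) L)) =
  sumR (map (fun wx => fst wx * sum_lt N (fun j => c j * F j (snd wx))) L).
Proof.
  induction L as [|[w x] L IH]; simpl.
  - apply sum_lt_zero_ext. intros; lra.
  - rewrite <- IH, <- sum_lt_scal, <- sum_lt_plus. apply sum_lt_ext. intros; simpl; ring.
Qed.

(* Gaussian elimination on the functions [u j], restricted to [V]: a linear form [phi] on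
   coefficient vectors that kills every relation holding on [V] is a combination of
   evaluations at finitely many points of [V]. *)
Section EvaluationCombination.

Variables (X : Type) (V : X -> Prop).

Definition kills_relations N (u : nat -> X -> R) (phi : nat -> R) : Prop :=
  forall c, (forall x, V x -> sum_lt N (fun j => c j * u j x) = 0) ->
    sum_lt N (fun j => phi j * c j) = 0.

Definition evaluation_combination N (u : nat -> X -> R) (phi : nat -> R) : Prop :=
  exists wxs : list (R * X), Forall (fun wx => V (snd wx)) wxs /\
    forall j, (j < N)%nat -> phi j = sumR (map (fun wx => fst wx * u j (snd wx)) wxs).

Lemma kills_relations_drop_vanishing N u phi :
  (forall x, V x -> u N x = 0) -> kills_relations (S N) u phi ->
  phi N = 0 /\ kills_relations N u phi.
Proof.
  intros Hz H.
  assert (HN : phi N = 0).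
  { set (c := fun j => if Nat.eqb j N then 1 else 0).
    assert (Hc : forall j, (j < N)%nat -> c j = 0).
    { intros j Hj. unfold c. destruct (Nat.eqb_spec j N); [lia|auto]. }
    specialize (H c). simpl in H. unfold c at 2 4 in H. rewrite Nat.eqb_refl in H.
    rewrite sum_lt_zero_ext, Rmult_1_r, Rplus_0_l in H by (intros; rewrite Hc; auto; ring).
    apply H. intros x Hx. rewrite sum_lt_zero_ext by (intros; rewrite Hc; auto; ring).
    rewrite Hz; auto; ring. }
  split; auto. intros c Hc.
  assert (sum_lt N (fun j => phi j * c j) + phi N * c N = 0); [|rewrite HN in *; lra].
  apply (H c). intros x Hx. simpl. rewrite Hc, Hz; auto. ring.
Qed.

Lemma evaluation_combination_extend_vanishing N u phi :
  (forall x, V x -> u N x = 0) -> phi N = 0 ->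
  evaluation_combination N u phi -> evaluation_combination (S N) u phi.
Proof.
  intros Hz HN [wxs [HF Hphi]]. exists wxs. split; auto. intros j Hj.
  destruct (Nat.eq_dec j N); [|apply Hphi; lia]. subst.
  rewrite HN, sumR_map_zero; auto. intros wx Hin.
  rewrite Forall_forall in HF. rewrite Hz; auto. ring.
Qed.

Section Pivot.

Variables (N : nat) (u : nat -> X -> R) (phi : nat -> R) (x0 : X).
Hypotheses (Vx0 : V x0) (Hpiv : u N x0 <> 0).

Let a := u N x0.
Let u' j x := u j x - (u N x / a) * u j x0.
Let phi' j := phi j - (phi N / a) * u j x0.

Lemma kills_relations_pivot : kills_relations (S N) u phi -> kills_relations N u' phi'.
Proof.
  intros H c Hc.
  set (S0 := sum_lt N (fun j => c j * u j x0)).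
  set (c2 := fun j => if Nat.eqb j N then - S0 / a else c j).
  assert (Ec2 : forall f, sum_lt N (fun j => f j * c2 j) = sum_lt N (fun j => f j * c j)
                /\ sum_lt N (fun j => c2 j * f j) = sum_lt N (fun j => c j * f j)).
  { intros f. split; apply sum_lt_ext; intros i Hi; unfold c2;
      destruct (Nat.eqb_spec i N); auto; lia. }
  assert (Hc2 : c2 N = - S0 / a) by (unfold c2; rewrite Nat.eqb_refl; auto).
  assert (H3 : sum_lt N (fun j => phi j * c j) + phi N * (- S0 / a) = 0).
  { rewrite <- Hc2, <- (proj1 (Ec2 phi)). apply (H c2). intros x Hx. simpl.
    rewrite (proj2 (Ec2 _)), Hc2. specialize (Hc x Hx). unfold u' in Hc.
    rewrite (sum_lt_ext _ _ (fun j => c j * u j x + (- (u N x / a)) * (c j * u j x0))) in Hc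
      by (intros; ring).
    rewrite sum_lt_plus, sum_lt_scal in Hc. fold S0 in Hc.
    field_simplify; [|auto]. field_simplify in Hc; [|auto]. lra. }
  unfold phi'.
  rewrite (sum_lt_ext _ _ (fun j => phi j * c j + (- (phi N / a)) * (c j * u j x0))) by (intros; ring).
  rewrite sum_lt_plus, sum_lt_scal. fold S0.
  field_simplify; [|auto]. field_simplify in H3; [|auto]. lra.
Qed.

Lemma evaluation_combination_unpivot :
  evaluation_combination N u' phi' -> evaluation_combination (S N) u phi.
Proof.
  intros [wxs [HF Hphi]].
  exists ((phi N / a - sumR (map (fun wx => fst wx * u N (snd wx)) wxs) / a, x0) :: wxs).
  split; [constructor; auto|]. intros j Hj. simpl. destruct (Nat.eq_dec j N).
  - subst j. fold a. field. auto.
  - rewrite (sumR_map_ext _ (fun wx => fst wx * u j (snd wx))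
      (fun wx => fst wx * u' j (snd wx) + (u j x0 / a) * (fst wx * u N (snd wx))))
      by (intros; unfold u'; field; auto).
    rewrite sumR_map_plus, sumR_map_scal, <- (Hphi j) by lia. unfold phi'. field. auto.
Qed.

End Pivot.

Lemma kills_relations_evaluation_combination N u phi :
  kills_relations N u phi -> evaluation_combination N u phi.
Proof.
  revert u phi. induction N as [|N IH]; intros u phi H.
  - exists []. split; auto. intros; lia.
  - destruct (classic (exists x0, V x0 /\ u N x0 <> 0)) as [[x0 [Hx0 Ha]]|Hno].
    + apply (evaluation_combination_unpivot N u phi x0 Hx0 Ha), IH, kills_relations_pivot; auto.
    + assert (Hz : forall x, V x -> u N x = 0).
      { intros x Hx. apply NNPP. intro. apply Hno. eauto. }
      destruct (kills_relations_drop_vanishing N u phi Hz H) as [HN HK].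
      apply evaluation_combination_extend_vanishing; auto.
Qed.

End EvaluationCombination.

(* The derivative along [s |-> p + s v] is defined analytically, so that it is a property of
   the function alone and not of the expression representing it. *)
Definition line (p v : pt) (s : R) : pt := fun i => p i + s * v i.
Definition is_dir_deriv (p v : pt) (F : pt -> R) (d : R) : Prop :=
  derivable_pt_lim (fun s => F (line p v s)) 0 d.

Lemma line_0 p v : line p v 0 = p.
Proof. apply functional_extensionality; intros; unfold line; ring. Qed.

Section DirectionalDerivative.

Variables p v : pt.

Lemma is_dir_deriv_ext F G d : (forall x, F x = G x) -> is_dir_deriv p v F d -> is_dir_deriv p v G d.
Proof. intros H. replace G with F; auto. apply functional_extensionality; auto. Qed.

Lemma is_dir_deriv_unique F d1 d2 : is_dir_deriv p v F d1 -> is_dir_deriv p v F d2 -> d1 = d2.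
Proof. apply uniqueness_limite. Qed.

Lemma is_dir_deriv_const c : is_dir_deriv p v (fun _ => c) 0.
Proof. apply derivable_pt_lim_const. Qed.

Lemma is_dir_deriv_plus F G a b : is_dir_deriv p v F a -> is_dir_deriv p v G b ->
  is_dir_deriv p v (fun x => F x + G x) (a + b).
Proof. apply derivable_pt_lim_plus. Qed.

Lemma is_dir_deriv_minus F G a b : is_dir_deriv p v F a -> is_dir_deriv p v G b ->
  is_dir_deriv p v (fun x => F x - G x) (a - b).
Proof. apply derivable_pt_lim_minus. Qed.

Lemma is_dir_deriv_mult F G a b : is_dir_deriv p v F a -> is_dir_deriv p v G b ->
  is_dir_deriv p v (fun x => F x * G x) (a * G p + F p * b).
Proof.
  intros H1 H2. pose proof (derivable_pt_lim_mult _ _ _ _ _ H1 H2) as H.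
  cbv beta in H. rewrite line_0 in H. exact H.
Qed.

Lemma is_dir_deriv_scal c F a : is_dir_deriv p v F a -> is_dir_deriv p v (fun x => c * F x) (c * a).
Proof.
  intros H. replace (c * a) with (0 * F p + c * a) by ring.
  exact (is_dir_deriv_mult _ _ _ _ (is_dir_deriv_const c) H).
Qed.

Lemma is_dir_deriv_sqr F a : is_dir_deriv p v F a -> is_dir_deriv p v (fun x => F x ^ 2) (2 * F p * a).
Proof.
  intros H. replace (2 * F p * a) with (a * F p + F p * a) by ring.
  eapply is_dir_deriv_ext; [|exact (is_dir_deriv_mult _ _ _ _ H H)]. intros; simpl; ring.
Qed.

Lemma is_dir_deriv_affine F A B : (forall s, F (line p v s) = A + s * B) -> is_dir_deriv p v F B.
Proof.
  intros H. unfold is_dir_deriv.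
  pose proof (derivable_pt_lim_plus _ _ 0 _ _ (derivable_pt_lim_const A 0)
    (derivable_pt_lim_scal id B 0 1 (derivable_pt_lim_id 0))) as H1.
  rewrite Rplus_0_l, Rmult_1_r in H1.
  replace (fun s => F (line p v s)) with (plus_fct (fct_cte A) (mult_real_fct B id)); auto.
  apply functional_extensionality; intros s.
  rewrite H. unfold plus_fct, fct_cte, mult_real_fct, id. ring.
Qed.

Lemma is_dir_deriv_coord_pow j a : is_dir_deriv p v (fun x => x j ^ a) (INR a * p j ^ pred a * v j).
Proof.
  unfold is_dir_deriv.
  replace (p j) with (p j + 0 * v j) at 1 by ring.
  apply (derivable_pt_lim_comp (fun s => p j + s * v j) (fun y => y ^ a)).
  - apply is_dir_deriv_affine with (A := p j) (F := fun x => x j). intros; unfold line; ring.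
  - apply derivable_pt_lim_pow.
Qed.

Lemma mon_eval_from_is_dir_deriv e : forall j, is_dir_deriv p v (fun x => mon_eval_from e x j)
  (sum_lt (length e) (fun i => INR (nth i e 0%nat) * mon_eval_from (dec_at i e) p j * v (j + i)%nat)).
Proof.
  induction e as [|a e IH]; intros j; [simpl; apply is_dir_deriv_const|].
  pose proof (is_dir_deriv_mult _ _ _ _ (is_dir_deriv_coord_pow j a) (IH (S j))) as H.
  change (length (a :: e)) with (S (length e)). rewrite sum_lt_shift.
  rewrite (sum_lt_ext _ _ (fun i => p j ^ a * (INR (nth i e 0%nat) *
      mon_eval_from (dec_at i e) p (S j) * v (S j + i)%nat))).
  2:{ intros i Hi. simpl. replace (j + S i)%nat with (S (j + i)) by lia. ring. }
  rewrite sum_lt_scal, Nat.add_0_r.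
  replace (INR (nth 0 (a :: e) 0%nat) * mon_eval_from (dec_at 0 (a :: e)) p j * v j)
    with (INR a * p j ^ pred a * v j * mon_eval_from e p (S j)) by (simpl; ring).
  exact H.
Qed.

Lemma mon_eval_is_dir_deriv n e : (length e <= n)%nat -> is_dir_deriv p v (mon_eval e)
  (sum_lt n (fun i => INR (nth i e 0%nat) * mon_eval (dec_at i e) p * v i)).
Proof.
  intros Hl. rewrite (sum_lt_truncate n (length e)); auto.
  - exact (mon_eval_from_is_dir_deriv e 0).
  - intros i Hi. rewrite nth_overflow by lia. simpl. ring.
Qed.

Lemma prep_eval_is_dir_deriv n r : prep_vars n r ->
  is_dir_deriv p v (prep_eval r) (sum_lt n (fun i => prep_eval (prep_deriv i r) p * v i)).
Proof.
  induction r as [|[c e] r IH]; intros Hv.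
  - rewrite sum_lt_zero_ext by (intros; unfold prep_eval; simpl; ring). exact (is_dir_deriv_const 0).
  - inversion Hv as [|? ? He Hr]; subst. simpl in He.
    pose proof (is_dir_deriv_plus _ _ _ _
      (is_dir_deriv_scal c _ _ (mon_eval_is_dir_deriv n e He)) (IH Hr)) as H.
    rewrite <- sum_lt_scal, <- sum_lt_plus in H.
    unfold prep_eval, prep_deriv in *. simpl.
    erewrite sum_lt_ext; [exact H|]. intros i Hi. unfold mon_deriv. simpl. ring.
Qed.

End DirectionalDerivative.

(* Exponent vectors of length [n] with entries at most [k]; they index a spanning family
   [basis_mon k n j] of the polynomials of degree at most [k]. *)
Fixpoint exponents (k n : nat) : list (list nat) :=
  match n with
  | O => [[]]
  | S n' => flat_map (fun a => map (cons a) (exponents k n')) (seq 0 (S k))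
  end.

Lemma exponents_length k n m : In m (exponents k n) -> length m = n.
Proof.
  revert m; induction n; intros m H.
  - destruct H as [H|[]]; subst; auto.
  - apply in_flat_map in H. destruct H as [a [_ H]]. apply in_map_iff in H.
    destruct H as [m' [<- H]]. simpl. rewrite IHn; auto.
Qed.

Lemma exponents_complete k n : forall e, (length e <= n)%nat -> (mon_deg e <= k)%nat ->
  exists m, In m (exponents k n) /\ forall x j, mon_eval_from e x j = mon_eval_from m x j.
Proof.
  induction n; intros e Hl Hd.
  - destruct e; simpl in Hl; [|lia]. exists []. simpl; auto.
  - destruct e as [|a e].
    + destruct (IHn [] ltac:(simpl; lia) Hd) as [m [Hm He]]. exists (0%nat :: m). split.
      * apply in_flat_map. exists 0%nat. split; [apply in_seq; lia|apply in_map; auto].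
      * intros x j. simpl. rewrite <- He. simpl. ring.
    + simpl in Hl, Hd. destruct (IHn e ltac:(lia) ltac:(lia)) as [m [Hm He]].
      exists (a :: m). split.
      * apply in_flat_map. exists a. split; [apply in_seq; lia|apply in_map; auto].
      * intros x j. simpl. rewrite He. auto.
Qed.

Definition nb_mon (k n : nat) : nat := length (exponents k n).
Definition basis_exp (k n j : nat) : list nat := nth j (exponents k n) [].
Definition basis_mon (k n j : nat) (x : pt) : R := mon_eval (basis_exp k n j) x.
Definition basis_dir_deriv (k n : nat) (p v : pt) (j : nat) : R :=
  sum_lt n (fun i => prep_eval (prep_deriv i [(1, basis_exp k n j)]) p * v i).

Lemma basis_exp_length k n j : (length (basis_exp k n j) <= n)%nat.
Proof.
  unfold basis_exp. destruct (nth_in_or_default j (exponents k n) []) as [H|H].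
  - rewrite (exponents_length k n _ H); lia.
  - rewrite H; simpl; lia.
Qed.

Lemma basis_mon_is_dir_deriv k n p v j : is_dir_deriv p v (basis_mon k n j) (basis_dir_deriv k n p v j).
Proof.
  eapply is_dir_deriv_ext; [|apply prep_eval_is_dir_deriv].
  - intros x. unfold prep_eval, basis_mon. simpl. ring.
  - repeat constructor. apply basis_exp_length.
Qed.

Lemma basis_comb_is_dir_deriv k n p v c N :
  is_dir_deriv p v (fun x => sum_lt N (fun j => c j * basis_mon k n j x))
    (sum_lt N (fun j => c j * basis_dir_deriv k n p v j)).
Proof.
  induction N; simpl; [apply is_dir_deriv_const|].
  apply is_dir_deriv_plus; auto. apply is_dir_deriv_scal, basis_mon_is_dir_deriv.
Qed.

Lemma prep_eval_basis_comb k n r : prep_vars n r -> prep_deg_le k r ->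
  exists c, forall x, prep_eval r x = sum_lt (nb_mon k n) (fun j => c j * basis_mon k n j x).
Proof.
  induction r as [|[a e] r IH]; intros Hv Hd.
  - exists (fun _ => 0). intros x. rewrite sum_lt_zero_ext by (intros; ring). reflexivity.
  - inversion Hv as [|? ? Hve Hvr]; inversion Hd as [|? ? Hde Hdr]; subst. simpl in *.
    destruct (IH Hvr Hdr) as [c Hc]. destruct (exponents_complete k n e Hve Hde) as [m [Hm He]].
    destruct (In_nth _ _ [] Hm) as [j0 [Hj0 Hnth]].
    exists (fun j => (if Nat.eqb j j0 then a else 0) + c j). intros x.
    rewrite (sum_lt_ext _ _ (fun j => (if Nat.eqb j j0 then a else 0) * basis_mon k n j x
      + c j * basis_mon k n j x)) by (intros; ring).
    rewrite sum_lt_plus, sum_lt_delta by auto. rewrite <- Hc. unfold prep_eval; simpl.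
    unfold basis_mon, basis_exp, mon_eval. rewrite Hnth, He. auto.
Qed.

Lemma represents_basis_comb k n c :
  represents n (map (fun j => (c j, basis_exp k n j)) (seq 0 (nb_mon k n)))
    (fun x => sum_lt (nb_mon k n) (fun j => c j * basis_mon k n j x)).
Proof.
  split.
  - apply Forall_forall. intros m Hm. apply in_map_iff in Hm. destruct Hm as [j [<- _]].
    apply basis_exp_length.
  - intros x. unfold prep_eval. rewrite map_map, sumR_map_seq. reflexivity.
Qed.

Lemma mon_eval_from_deg0 e : mon_deg e = 0%nat -> forall x j, mon_eval_from e x j = 1.
Proof.
  induction e; intros H x j; simpl in *; auto.
  replace a with 0%nat by lia. rewrite IHe by lia. simpl; ring.
Qed.

Lemma sumR_combine_fst ws (xs : list pt) : length ws = length xs ->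
  sumR (map (fun wx => fst wx * 1) (combine ws xs)) = sumR ws.
Proof. revert xs; induction ws; intros [|x xs] H; simpl in *; try lia; auto. rewrite IHws by lia. ring. Qed.

Section AffineCombination.

Variables (ws : list R) (xs : list pt).
Hypotheses (Hlen : length ws = length xs) (Hsum : sumR ws = 1).

Lemma mon_eval_from_comb e : (mon_deg e <= 1)%nat -> forall j,
  mon_eval_from e (comb ws xs) j =
  sumR (map (fun wx => fst wx * mon_eval_from e (snd wx) j) (combine ws xs)).
Proof.
  induction e as [|a e IH]; intros Hd j; simpl in *.
  - rewrite sumR_combine_fst; auto.
  - destruct a as [|[|a]]; [| |lia].
    + simpl. rewrite IH by lia. rewrite Rmult_1_l. apply sumR_map_ext. intros; ring.
    + assert (H0 : mon_deg e = 0%nat) by lia. rewrite (mon_eval_from_deg0 e H0).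
      rewrite (sumR_map_ext _ _ (fun wx => fst wx * snd wx j)).
      * unfold comb. ring.
      * intros wx _. rewrite (mon_eval_from_deg0 e H0), pow_1, Rmult_1_r. reflexivity.
Qed.

Lemma prep_eval_comb r : prep_deg_le 1 r ->
  prep_eval r (comb ws xs) = sumR (map (fun wx => fst wx * prep_eval r (snd wx)) (combine ws xs)).
Proof.
  induction r as [|[c e] r IH]; intros Hd; unfold prep_eval in *; simpl.
  - rewrite sumR_map_zero; auto. intros; ring.
  - inversion Hd; subst. rewrite IH by auto. unfold mon_eval. rewrite mon_eval_from_comb by auto.
    rewrite (sumR_map_ext _ (fun wx => fst wx * (c * mon_eval_from e (snd wx) 0 + _))
      (fun wx => c * (fst wx * mon_eval_from e (snd wx) 0) +
         fst wx * sumR (map (fun m => fst m * mon_eval_from (snd m) (snd wx) 0) r)))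
      by (intros; ring).
    rewrite sumR_map_plus, sumR_map_scal. auto.
Qed.

Lemma affine_comb n l : IsPolyDeg n 1 l ->
  l (comb ws xs) = sumR (map (fun wx => fst wx * l (snd wx)) (combine ws xs)).
Proof.
  intros [r [[_ Hr] Hd]]. rewrite Hr, prep_eval_comb by auto.
  apply sumR_map_ext. intros; rewrite Hr; auto.
Qed.

End AffineCombination.

Lemma affine_comb2 n l a b x y : IsPolyDeg n 1 l -> a + b = 1 ->
  l (comb [a; b] [x; y]) = a * l x + b * l y.
Proof. intros H Hs. rewrite (affine_comb [a; b] [x; y]) with (n := n); simpl; auto; lra. Qed.

Lemma comb_scale a ws (xs : list pt) i :
  sumR (map (fun wx => fst wx * snd wx i) (combine (map (Rmult a) ws) xs)) = a * comb ws xs i.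
Proof.
  revert xs; induction ws; intros [|x xs]; unfold comb; simpl; try ring.
  rewrite IHws. unfold comb. ring.
Qed.

Lemma combine_app {A B} (l1 l2 : list A) (m1 m2 : list B) : length l1 = length m1 ->
  combine (l1 ++ l2) (m1 ++ m2) = combine l1 m1 ++ combine l2 m2.
Proof. revert m1; induction l1; intros [|b m1] H; simpl in *; try lia; auto. rewrite IHl1 by lia; auto. Qed.

Lemma comb2_comb a b ws xs ws' xs' : length ws = length xs ->
  comb [a; b] [comb ws xs; comb ws' xs'] = comb (map (Rmult a) ws ++ map (Rmult b) ws') (xs ++ xs').
Proof.
  intros Hl. apply functional_extensionality. intros i. unfold comb at 1. simpl.
  unfold comb at 3. rewrite combine_app by (rewrite length_map; auto).
  rewrite map_app, sumR_app, !comb_scale. ring.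
Qed.

Lemma conv_in (S : pt -> Prop) x : S x -> conv S x.
Proof.
  intros H. exists [1], [x]. repeat split; simpl; auto.
  - constructor; auto; lra.
  - lra.
  - apply functional_extensionality. intros i. unfold comb; simpl. ring.
Qed.

Lemma conv_aff S x : conv S x -> aff S x.
Proof. intros [ws [xs [H1 [_ H]]]]. exists ws, xs. auto. Qed.

Lemma conv_comb2 S a b x y : conv S x -> conv S y -> 0 <= a -> 0 <= b -> a + b = 1 ->
  conv S (comb [a; b] [x; y]).
Proof.
  intros [ws [xs [H1 [H2 [H3 [H4 ->]]]]]] [ws' [xs' [H1' [H2' [H3' [H4' ->]]]]]] Ha Hb Hab.
  rewrite comb2_comb by auto. exists (map (Rmult a) ws ++ map (Rmult b) ws'), (xs ++ xs').
  repeat split.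
  - rewrite !length_app, !length_map. lia.
  - apply Forall_app. split; apply Forall_map; eapply Forall_impl; eauto; intros; simpl; nra.
  - rewrite sumR_app, !sumR_map_Rmult, H3, H3'. lra.
  - apply Forall_app; auto.
Qed.

Lemma aff_comb2 S a b x y : aff S x -> aff S y -> a + b = 1 -> aff S (comb [a; b] [x; y]).
Proof.
  intros [ws [xs [H1 [H3 [H4 ->]]]]] [ws' [xs' [H1' [H3' [H4' ->]]]]] Hab.
  rewrite comb2_comb by auto. exists (map (Rmult a) ws ++ map (Rmult b) ws'), (xs ++ xs').
  repeat split.
  - rewrite !length_app, !length_map. lia.
  - rewrite sumR_app, !sumR_map_Rmult, H3, H3'. lra.
  - apply Forall_app; auto.
Qed.

Lemma affine_conv_nonneg n (S : pt -> Prop) l x : IsPolyDeg n 1 l ->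
  (forall y, S y -> 0 <= l y) -> conv S x -> 0 <= l x.
Proof.
  intros Hl HS [ws [xs [H1 [H2 [H3 [H4 ->]]]]]]. rewrite (affine_comb ws xs H1 H3 n) by auto.
  clear H3. revert xs H1 H4; induction ws as [|w ws IH]; intros [|y xs] H1 H4; simpl in *; try lra.
  inversion H2; inversion H4; subst. pose proof (HS y ltac:(auto)).
  pose proof (IH ltac:(auto) xs ltac:(lia) ltac:(auto)). nra.
Qed.

Ltac generalize_coords := repeat match goal with
  | |- context [?f ?i] => match type of f with pt =>
      let t := fresh "t" in set (t := f i); clearbody t end end.

Lemma sqr_affine_bound A B a k : 0 <= a <= 1 -> 0 < k ->
  ((A - a * B) / k) ^ 2 <= 2 / k ^ 2 * A ^ 2 + 2 / k ^ 2 * B ^ 2.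
Proof.
  intros Ha Hk.
  assert (H1 : (A - a * B) ^ 2 <= 2 * A ^ 2 + 2 * B ^ 2).
  { assert (0 <= (A + a * B) ^ 2) by apply pow2_ge_0.
    assert (0 <= (1 - a * a) * (B * B)) by (apply Rmult_le_pos; nra). simpl in *. nra. }
  replace (((A - a * B) / k) ^ 2) with ((A - a * B) ^ 2 / k ^ 2) by (field; lra).
  replace (2 / k ^ 2 * A ^ 2 + 2 / k ^ 2 * B ^ 2) with ((2 * A ^ 2 + 2 * B ^ 2) / k ^ 2) by (field; lra).
  apply Rmult_le_compat_r; auto. left. apply Rinv_0_lt_compat. nra.
Qed.

(* A point [y] near [p] is written as [alpha x' + (1 - alpha) z] with [x'] in the hull close to
   [x] and [z] affinely near [q], hence in the hull. *)
Lemma relint_conv_between n V0 x q p alpha : cl n (conv V0) x -> relint n (conv V0) q ->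
  conv V0 p -> 0 < alpha < 1 -> (forall i, p i = alpha * x i + (1 - alpha) * q i) ->
  relint n (conv V0) p.
Proof.
  intros [_ Hcl] [Cq [d [Hd Hball]]] Cp Ha Hp. split; auto.
  set (k := 1 - alpha). assert (Hk : 0 < k) by (unfold k; lra).
  assert (Hk2 : 0 < k ^ 2) by (apply pow_lt; auto).
  assert (He : 0 < d * k ^ 2 / 4) by (apply Rmult_lt_0_compat; [apply Rmult_lt_0_compat|]; lra).
  exists (d * k ^ 2 / 4). split; auto. intros y Hy Hdy.
  destruct (Hcl _ He) as [x' [Cx' Hdx']].
  set (z := comb [1 / k; - alpha / k] [y; x']).
  assert (Az : aff (conv V0) z).
  { apply aff_comb2; auto. apply conv_aff, conv_in; auto. unfold k. field. lra. }
  assert (Dz : dist2 n q z < d).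
  { unfold dist2 in *. eapply Rle_lt_trans.
    - apply (sum_lt_le _ _ (fun i => 2 / k ^ 2 * (p i - y i) ^ 2 + 2 / k ^ 2 * (x i - x' i) ^ 2)).
      intros i _. replace (q i - z i) with (((p i - y i) - alpha * (x i - x' i)) / k).
      + apply sqr_affine_bound; lra.
      + unfold z, comb; simpl. rewrite Hp. unfold k. generalize_coords. field. lra.
    - rewrite sum_lt_plus, !sum_lt_scal.
      assert (0 < 2 / k ^ 2) by (apply Rdiv_lt_0_compat; lra).
      apply Rlt_le_trans with (2 / k ^ 2 * (d * k ^ 2 / 4) + 2 / k ^ 2 * (d * k ^ 2 / 4)).
      + apply Rplus_lt_le_compat; [|left]; apply Rmult_lt_compat_l; auto.
      + right. field. lra. }
  replace y with (comb [alpha; k] [x'; z]).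
  - apply conv_comb2; auto; unfold k; lra.
  - apply functional_extensionality. intros i. unfold z, comb; simpl. generalize_coords. field. lra.
Qed.

(* Moving from [x] through [q] a little beyond stays in the hull, so affine functions
   nonnegative on the hull cannot be large at [x] compared to their value at [q]. *)
Lemma relint_affine_bound n V0 q x : relint n (conv V0) q -> V0 x -> exists c, 0 <= c /\
  forall l, IsPolyDeg n 1 l -> (forall y, V0 y -> 0 <= l y) -> l x <= c * l q.
Proof.
  intros [Cq [d [Hd Hball]]] Vx.
  assert (HD : 0 <= dist2 n q x).
  { unfold dist2. rewrite <- (sum_lt_zero n). apply sum_lt_le. intros; apply pow2_ge_0. }
  set (D := dist2 n q x) in *.
  set (s := d / (d + D + 1)).
  assert (Hs : 0 < s) by (apply Rdiv_lt_0_compat; lra).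
  assert (Hs1 : s * (d + D + 1) = d) by (unfold s; field; lra).
  exists ((1 + s) / s). split; [left; apply Rdiv_lt_0_compat; lra|].
  intros l Hl Hpos.
  assert (Cz : conv V0 (comb [1 + s; - s] [q; x])).
  { apply Hball.
    - apply aff_comb2; [apply conv_aff, conv_in; auto|apply conv_aff, conv_in, conv_in; auto|ring].
    - unfold dist2. rewrite (sum_lt_ext _ _ (fun i => s ^ 2 * (q i - x i) ^ 2)).
      + rewrite sum_lt_scal. fold (dist2 n q x). fold D.
        assert (s < 1) by (apply (Rmult_lt_reg_r (d + D + 1)); lra).
        assert (s * D < d) by nra. nra.
      + intros i _. unfold comb; simpl. generalize_coords. ring. }
  pose proof (affine_conv_nonneg n V0 l _ Hl Hpos Cz) as H.
  rewrite (affine_comb2 n) in H by (auto; ring).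
  apply (Rmult_le_reg_l s); auto.
  replace (s * ((1 + s) / s * l q)) with ((1 + s) * l q) by (field; lra). lra.
Qed.

Lemma relint_affine_bound_list n V0 q (xs : list (R * pt)) : relint n (conv V0) q ->
  Forall (fun wx => V0 (snd wx)) xs ->
  exists c, 0 <= c /\ forall l, IsPolyDeg n 1 l -> (forall y, V0 y -> 0 <= l y) ->
    Forall (fun wx => l (snd wx) <= c * l q) xs.
Proof.
  intros Hq. induction xs as [|[w x] xs IH]; intros HF.
  - exists 0. split; [lra|auto].
  - inversion HF as [|? ? Hx Hxs]; subst. destruct (IH Hxs) as [c [Hc H]].
    destruct (relint_affine_bound n V0 q x Hq Hx) as [c1 [Hc1 H1]].
    exists (Rmax c c1). split; [eapply Rle_trans; [apply Hc|apply Rmax_l]|].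
    intros l Hl Hpos.
    assert (Hlq : 0 <= l q) by (apply (affine_conv_nonneg n V0); auto; apply Hq).
    constructor.
    + eapply Rle_trans; [apply (H1 l Hl Hpos)|]. apply Rmult_le_compat_r; auto. apply Rmax_r.
    + eapply Forall_impl; [|apply (H l Hl Hpos)]. intros wx Hwx. simpl in *.
      eapply Rle_trans; [apply Hwx|]. apply Rmult_le_compat_r; auto. apply Rmax_l.
Qed.

Lemma two_mul_le_amgm eps a b : 0 < eps -> 2 * Rabs (a * b) <= eps * a ^ 2 + b ^ 2 / eps.
Proof.
  intros He. rewrite Rabs_mult.
  assert (H1 : 2 * eps * (Rabs a * Rabs b) <= eps ^ 2 * a ^ 2 + b ^ 2).
  { assert (0 <= (eps * Rabs a - Rabs b) ^ 2) by apply pow2_ge_0.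
    rewrite <- (pow2_abs a), <- (pow2_abs b). nra. }
  apply (Rmult_le_reg_l eps); auto.
  replace (eps * (eps * a ^ 2 + b ^ 2 / eps)) with (eps ^ 2 * a ^ 2 + b ^ 2) by (field; lra). lra.
Qed.

Definition weighted_amgm (eps : R) (p : pt) (wxs : list (R * pt)) (h : pt -> R) : R :=
  sumR (map (fun wx => Rabs (fst wx) * (eps * h p + h (snd wx) / eps)) wxs).

Lemma weighted_amgm_le eps p wxs h B : 0 < eps -> Forall (fun wx => h (snd wx) <= B) wxs ->
  weighted_amgm eps p wxs h <=
  eps * sumR (map (fun wx => Rabs (fst wx)) wxs) * h p + sumR (map (fun wx => Rabs (fst wx)) wxs) * B / eps.
Proof.
  intros He. unfold weighted_amgm. induction wxs as [|[w x] wxs IH]; intros HF; simpl.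
  - unfold Rdiv; lra.
  - inversion HF as [|? ? Hx Hxs]; subst. simpl in Hx. pose proof (IH Hxs).
    assert (Rabs w * (h x / eps) <= Rabs w * (B / eps)).
    { apply Rmult_le_compat_l; [apply Rabs_pos|]. unfold Rdiv.
      apply Rmult_le_compat_r; auto. left; apply Rinv_0_lt_compat; auto. }
    unfold Rdiv in *. nra.
Qed.

(* If the derivative at [p] is a signed combination of evaluations, the product rule
   [D(g^2) = 2 g(p) D(g)] and AM-GM bound the derivative of a sum of squares by its values
   at [p] and at the evaluation points. *)
Section SosDerivative.

Variables (n k : nat) (p v : pt) (wxs : list (R * pt)).
Hypothesis dir_deriv_eval : forall g, IsPolyDeg n k g ->
  is_dir_deriv p v g (sumR (map (fun wx => fst wx * g (snd wx)) wxs)).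

Lemma sos_dir_deriv_amgm eps gs : 0 < eps -> Forall (IsPolyDeg n k) gs ->
  exists d, is_dir_deriv p v (fun x => sumR (map (fun g => g x ^ 2) gs)) d /\
    Rabs d <= weighted_amgm eps p wxs (fun x => sumR (map (fun g => g x ^ 2) gs)).
Proof.
  intros He. induction gs as [|g gs IH]; intros HF.
  - exists 0. split; [exact (is_dir_deriv_const p v 0)|].
    rewrite Rabs_R0. unfold weighted_amgm. simpl. rewrite sumR_map_zero; [lra|].
    intros; unfold Rdiv; ring.
  - inversion HF as [|? ? Hg Hgs]; subst. destruct (IH Hgs) as [d [Hd Hb]].
    set (Dg := sumR (map (fun wx => fst wx * g (snd wx)) wxs)).
    exists (2 * g p * Dg + d). split.
    + apply is_dir_deriv_plus; auto. apply is_dir_deriv_sqr, dir_deriv_eval; auto.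
    + assert (Hsq : Rabs (2 * g p * Dg) <= weighted_amgm eps p wxs (fun x => g x ^ 2)).
      { unfold Dg, weighted_amgm. rewrite <- sumR_map_scal.
        eapply Rle_trans; [apply Rabs_sumR|]. apply sumR_map_le. intros wx _.
        replace (2 * g p * (fst wx * g (snd wx))) with (fst wx * (2 * (g p * g (snd wx)))) by ring.
        rewrite Rabs_mult, Rabs_mult, (Rabs_right 2) by lra.
        apply Rmult_le_compat_l; [apply Rabs_pos|apply two_mul_le_amgm; auto]. }
      assert (Hsplit : weighted_amgm eps p wxs (fun x => sumR (map (fun g0 => g0 x ^ 2) (g :: gs))) =
        weighted_amgm eps p wxs (fun x => g x ^ 2) +
        weighted_amgm eps p wxs (fun x => sumR (map (fun g0 => g0 x ^ 2) gs))).
      { unfold weighted_amgm. rewrite <- sumR_map_plus. apply sumR_map_ext. intros. simpl. unfold Rdiv. ring. }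
      rewrite Hsplit. eapply Rle_trans; [apply Rabs_triang|lra].
Qed.

Lemma sos_dir_deriv_bound eps B gs : 0 < eps -> Forall (IsPolyDeg n k) gs ->
  Forall (fun wx => sumR (map (fun g => g (snd wx) ^ 2) gs) <= B) wxs ->
  exists d, is_dir_deriv p v (fun x => sumR (map (fun g => g x ^ 2) gs)) d /\
    Rabs d <= eps * sumR (map (fun wx => Rabs (fst wx)) wxs) * sumR (map (fun g => g p ^ 2) gs)
      + sumR (map (fun wx => Rabs (fst wx)) wxs) * B / eps.
Proof.
  intros He HF HB. destruct (sos_dir_deriv_amgm eps gs He HF) as [d [Hd Hle]].
  exists d. split; auto. eapply Rle_trans; [exact Hle|]. apply weighted_amgm_le; auto.
Qed.

End SosDerivative.

Section ThetaBodyBeyondSingularPoint.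

Variables (n k : nat) (I : (pt -> R) -> Prop) (p q : pt).
Hypotheses (HI : IsIdeal n I) (Vp : VR n I p) (Htan : tangent n I p q)
  (Hq : relint n (conv (VR n I)) q).

Let v : pt := fun i => q i - p i.

Lemma tangent_dir_deriv_vanishing f r : represents n r f ->
  (forall x, VR n I x -> f x = 0) -> is_dir_deriv p v f 0.
Proof.
  intros Hr Hf. pose proof (prep_eval_is_dir_deriv p v n r (proj1 Hr)) as H.
  unfold v in H. rewrite (proj2 Htan f r Hr Hf) in H.
  eapply is_dir_deriv_ext; [|exact H]. intros x. symmetry. apply (proj2 Hr).
Qed.

(* The tangency of [q] says exactly that the derivative towards [q] kills every polynomial
   relation among the monomials on the variety. *)
Lemma dir_deriv_evaluation_combination : exists wxs : list (R * pt),
  Forall (fun wx => VR n I (snd wx)) wxs /\ forall g, IsPolyDeg n k g ->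
    is_dir_deriv p v g (sumR (map (fun wx => fst wx * g (snd wx)) wxs)).
Proof.
  destruct (kills_relations_evaluation_combination pt (VR n I) (nb_mon k n)
    (basis_mon k n) (basis_dir_deriv k n p v)) as [wxs [HF Hphi]].
  { intros c Hc. pose proof (represents_basis_comb k n c) as Hr.
    pose proof (is_dir_deriv_unique _ _ _ _ _ (tangent_dir_deriv_vanishing _ _ Hr Hc)
      (basis_comb_is_dir_deriv k n p v c (nb_mon k n))) as H.
    rewrite H. apply sum_lt_ext. intros; ring. }
  exists wxs. split; auto. intros g [r [[Hv Hr] Hd]].
  destruct (prep_eval_basis_comb k n r Hv Hd) as [c Hc].
  pose proof (basis_comb_is_dir_deriv k n p v c (nb_mon k n)) as H.
  rewrite (sum_lt_ext _ _ (fun j => c j * sumR (map (fun wx => fst wx * basis_mon k n j (snd wx)) wxs)))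
    in H by (intros; rewrite Hphi; auto).
  rewrite sum_lt_sumR_exchange in H.
  rewrite (sumR_map_ext _ _ (fun wx => fst wx * g (snd wx))) in H by (intros; rewrite Hr, Hc; auto).
  eapply is_dir_deriv_ext; [|exact H]. intros x. rewrite Hr, Hc. auto.
Qed.

(* For [l] a k-sos, [l - sos] vanishes on the variety, so [D l = D sos]; as [D l = l q - l p],
   the bound on [D sos] (with [eps] large) controls [l q] by [l p]. *)
Lemma ksos_affine_growth : exists K, 0 < K /\ forall l, IsPolyDeg n 1 l -> ksos_mod n k I l ->
  0 <= l p /\ l q <= K * l p.
Proof.
  destruct dir_deriv_evaluation_combination as [wxs [HF Hdd]].
  destruct (relint_affine_bound_list n (VR n I) q wxs Hq HF) as [C [HC0 HC]].
  set (W := sumR (map (fun wx => Rabs (fst wx)) wxs)).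
  assert (HW : 0 <= W) by (apply sumR_map_nonneg; intros; apply Rabs_pos).
  set (eps := 2 * W * C + 1).
  assert (Heps : 0 < eps) by (unfold eps; nra).
  exists (2 * (1 + eps * W)). split; [nra|]. intros l Hl [gs [Hgs HIl]].
  set (S := fun x => sumR (map (fun g => g x ^ 2) gs)).
  assert (HlS : forall y, VR n I y -> l y = S y).
  { intros y Hy. pose proof (proj2 Hy _ HIl) as H. cbv beta in H. unfold S. lra. }
  assert (Hlpos : forall y, VR n I y -> 0 <= l y).
  { intros y Hy. rewrite HlS; auto. apply sumR_map_nonneg. intros; apply pow2_ge_0. }
  assert (HQ : 0 <= l q) by (apply (affine_conv_nonneg n (VR n I)); auto; apply Hq).
  assert (HP : 0 <= l p) by auto.
  assert (HB : Forall (fun wx => S (snd wx) <= C * l q) wxs).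
  { pose proof (HC l Hl Hlpos) as H. rewrite Forall_forall in *. intros wx Hwx.
    rewrite <- HlS; auto. }
  destruct (sos_dir_deriv_bound n k p v wxs Hdd eps (C * l q) gs Heps Hgs HB) as [d [Hd Hbd]].
  change (sumR (map (fun g => g p ^ 2) gs)) with (S p) in Hbd.
  change (sumR (map (fun wx => Rabs (fst wx)) wxs)) with W in Hbd. rewrite <- (HlS p Vp) in Hbd.
  assert (Hlin : is_dir_deriv p v l (l q - l p)).
  { apply is_dir_deriv_affine with (A := l p). intros s.
    replace (line p v s) with (comb [1 - s; s] [p; q]).
    - rewrite (affine_comb2 n) by (auto; ring). ring.
    - apply functional_extensionality; intros i. unfold line, comb, v; simpl. ring. }
  destruct (proj1 HI _ HIl) as [r Hr].
  assert (HD : l q - l p - d = 0).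
  { apply (is_dir_deriv_unique p v (fun x => l x - S x)); [exact (is_dir_deriv_minus p v l S _ _ Hlin Hd)|].
    apply (tangent_dir_deriv_vanishing _ r Hr). intros y Hy. exact (proj2 Hy _ HIl). }
  assert (Hhalf : W * (C * l q) / eps <= l q / 2).
  { apply (Rmult_le_reg_r eps); auto.
    replace (W * (C * l q) / eps * eps) with (W * C * l q) by (field; lra). unfold eps. nra. }
  split; auto. pose proof (Rle_abs d). nra.
Qed.

Lemma TH_beyond_singular_point : exists t, 0 < t /\ TH n k I (comb [1 + t; - t] [p; q]).
Proof.
  destruct ksos_affine_growth as [K [HK Hgrowth]].
  exists (1 / K). split; [apply Rdiv_lt_0_compat; lra|]. split.
  - intros i Hi. unfold comb; simpl. rewrite (proj1 Vp i Hi), (proj1 Htan i Hi). ring.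
  - intros l Hl Hsos. destruct (Hgrowth l Hl Hsos) as [HP HQ].
    rewrite (affine_comb2 n) by (auto; ring).
    assert (1 / K * l q <= l p) by (apply (Rmult_le_reg_l K); auto; field_simplify; lra).
    assert (0 <= 1 / K * l p) by (apply Rmult_le_pos; auto; left; apply Rdiv_lt_0_compat; lra).
    lra.
Qed.

End ThetaBodyBeyondSingularPoint.

Theorem mainTheorem14 (n : nat) (I : (pt -> R) -> Prop) :
  IsIdeal n I ->
  (exists p, convex_singular n I p) ->
  ~ TH_exact n I.
Proof.
  intros HI [p [Vp [[_ Hnot_relint] [q [Htan Hq]]]]] [k Hexact].
  destruct (TH_beyond_singular_point n k I p q HI Vp Htan Hq) as [t [Ht Hth]].
  apply Hnot_relint.
  apply (relint_conv_between n (VR n I) (comb [1 + t; - t] [p; q]) q p (1 / (1 + t))).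
  - apply Hexact, Hth.
  - exact Hq.
  - apply conv_in; auto.
  - split; [apply Rdiv_lt_0_compat; lra|].
    apply (Rmult_lt_reg_r (1 + t)); [lra|]. field_simplify; lra.
  - intros i. unfold comb; simpl. field. lra.
Qed.
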